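(* Let $G=\bigl((f_j)_{j=1}^n;(\mu^{R})_{\emptyset\ne R\subseteq[n]}\bigr)$ be an $n$-resource selection game with $f_1,\ldots,f_n$ continuous. Then $P_G\in D_G$ and $E_G(P_G)=h_G$; i.e., $P_G\in\arg\max_{S\in D_G}E_G(S)$ (so $P_G$ is the greatest element of this set of maximizers).
   Context: An $n$-resource selection game is $G=\bigl((f_j)_{j=1}^n;(\mu^{R})_{\emptyset\ne R\subseteq[n]}\bigr)$ with each $f_j:[0,\infty)\to\mathbb{R}$ nondecreasing and each $\mu^R\ge0$. Equalization: for nondecreasing $g_1,\ldots,g_m:[0,\infty)\to\mathbb{R}\cup\{\mathrm{undefined}\}$, $\mathrm{eq}(g_1,\ldots,g_m)(\mu)=g_1(\mu_1)$ if there exist $\mu_1,\ldots,\mu_m\ge0$ summing to $\mu$ with $g_1(\mu_1)=\cdots=g_m(\mu_m)\in\mathbb{R}$, else $\mathrm{undefined}$. For nonempty $S\subseteq[n]$: $E_G(S)=\mathrm{eq}(f_k:k\in S)\bigl(\sum_{\emptyset\ne R\subseteq S}\mu^R\bigr)$; $M_G(S)$ is the set of nonempty $S'\subseteq S$ such that for every $0\le\mu\le\sum_{R\subseteq S,\,R\cap S'\ne\emptyset}\mu^R$, $\mathrm{eq}(f_k:k\in S')(\mu)\ne E_G(S)$ ($\mathrm{undefined}$ differs from every real); $D_G=\{S: E_G(S)\in\mathbb{R},\ M_G(S)=\emptyset\}$; $h_G=\max_{S\in D_G}E_G(S)$; $P_G=\bigcup\{S\in D_G:E_G(S)=h_G\}$.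 *)

From mathcomp Require Import all_boot.
From Stdlib Require Import Reals.
Set Implicit Arguments.
Unset Strict Implicit.
Unset Printing Implicit Defensive.

Local Open Scope R_scope.

Section Game.
Variable n : nat.
(* cost functions f_j : [0,oo) -> R (only values on [0,oo) matter) *)
Variable f : 'I_n -> R -> R.
(* demands mu^R for nonempty R ⊆ [n] (value at set0 unused) *)
Variable mu : {set 'I_n} -> R.

(* eq(f_k : k in S)(m) is defined and equals c :
   there are m_k >= 0 (k in S) summing to m with f_k(m_k) = c for all k in S. *)
Definition EqVal (S : {set 'I_n}) (m c : R) : Prop :=
  exists x : 'I_n -> R,
    (forall k, k \in S -> 0 <= x k) /\
    \big[Rplus/0]_(k in S) x k = m /\
    (forall k, k \in S -> f k (x k) = c).

Definition demand (S : {set 'I_n}) : R :=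
  \big[Rplus/0]_(T : {set 'I_n} | (T != set0) && (T \subset S)) mu T.

Definition EG (S : {set 'I_n}) (c : R) : Prop := EqVal S (demand S) c.

Definition demand_meet (S S' : {set 'I_n}) : R :=
  \big[Rplus/0]_(T : {set 'I_n} | (T \subset S) && (T :&: S' != set0)) mu T.

Definition inM (S : {set 'I_n}) (c : R) (S' : {set 'I_n}) : Prop :=
  S' != set0 /\ S' \subset S /\
  forall m, 0 <= m <= demand_meet S S' -> ~ EqVal S' m c.

Definition inD (S : {set 'I_n}) : Prop :=
  S != set0 /\ exists c, EG S c /\ forall S', ~ inM S c S'.

Definition is_hG (h : R) : Prop :=
  (exists S, inD S /\ EG S h) /\
  (forall S c, inD S -> EG S c -> c <= h).

Definition is_PG (h : R) (P : {set 'I_n}) : Prop :=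
  forall j, j \in P <-> exists S, inD S /\ EG S h /\ j \in S.
End Game.

Definition nondecr_nonneg (g : R -> R) : Prop :=
  forall x y, 0 <= x -> x <= y -> g x <= g y.

Definition cont_nonneg (g : R -> R) : Prop :=
  forall x, 0 <= x -> forall eps, 0 < eps ->
    exists delta, 0 < delta /\
      forall y, 0 <= y -> Rabs (y - x) < delta -> Rabs (g y - g x) < eps.

(* For fixed S the equalization eq(f_k : k in S) is monotone, and continuity of the f_k makes
   it surjective: if the f_k can be equalized at level c with total at most m, then they can be
   equalized with total exactly m at some level c' >= c, namely the supremum of such levels.
   Hence removing from S a member S' of M_G(S) leaves E_G(S \ S') defined and >= E_G(S), and by
   induction on |S| every defined E_G(S) is dominated by E_G of a member of D_G.  Conversely,
   the members of D_G at level h_G equalize every S' included in P_G at level h_G using at most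
   the demand of P_G meeting S' (split S' along one such member and induct).  For S' = P_G this
   gives E_G(P_G) >= h_G, hence = h_G by maximality; for the other S' it shows M_G(P_G) is empty. *)

From HB Require Import structures.
From mathcomp Require Import all_boot.
From Stdlib Require Import Reals Lra Classical ClassicalEpsilon.
Local Open Scope R_scope.

Local Notation "\sumR_ ( i 'in' A ) F" := (\big[Rplus/0]_(i in A) F)
  (at level 41, F at level 41, i, A at level 50).

HB.instance Definition _ := Monoid.isComLaw.Build R 0 Rplus
  (fun x y z => esym (Rplus_assoc x y z)) Rplus_comm Rplus_0_l.

Section RealSums.
Context {I : finType}.
Implicit Types (P : pred I) (F G : I -> R).

Lemma sumR_ge0 P F : (forall i, P i -> 0 <= F i) -> 0 <= \big[Rplus/0]_(i | P i) F i.
Proof. by move=> F_ge0; apply: (big_ind (fun x => 0 <= x)) => //; [lra | move=> x y; lra]. Qed.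

Lemma ler_sumR P F G : (forall i, P i -> F i <= G i) ->
  \big[Rplus/0]_(i | P i) F i <= \big[Rplus/0]_(i | P i) G i.
Proof.
by move=> FG; apply: (big_ind2 (fun x y => x <= y)) => //; [lra | move=> ????; lra].
Qed.

Lemma ltr_sumR P F G j : P j -> (forall i, P i -> F i <= G i) -> F j < G j ->
  \big[Rplus/0]_(i | P i) F i < \big[Rplus/0]_(i | P i) G i.
Proof.
move=> Pj FG FGj; rewrite (bigD1 j) // [X in _ < X](bigD1 j) //=.
suff : \big[Rplus/0]_(i | P i && (i != j)) F i <= \big[Rplus/0]_(i | P i && (i != j)) G i
  by lra.
by apply: ler_sumR => i /andP[/FG].
Qed.

Lemma sumR_mull P F a :
  \big[Rplus/0]_(i | P i) (a * F i) = a * \big[Rplus/0]_(i | P i) F i.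
Proof. by apply: (big_ind2 (fun x y => x = a * y)) => //; [ring | move=> ???? -> ->; ring]. Qed.

Lemma sumR_sub P F G :
  \big[Rplus/0]_(i | P i) (F i - G i) =
  \big[Rplus/0]_(i | P i) F i - \big[Rplus/0]_(i | P i) G i.
Proof.
rewrite [X in _ = X - _](eq_bigr (fun i => (F i - G i) + G i)); last by move=> i _; ring.
by rewrite [X in _ = X - _]big_split /=; ring.
Qed.

Lemma sumR_const (S : {set I}) c : \sumR_(i in S) c = INR #|S| * c.
Proof.
rewrite big_const; elim: #|S| => [|k IH]; first by rewrite /=; ring.
by rewrite iterS S_INR IH; ring.
Qed.

Lemma sumR_ge_term P F j : P j -> (forall i, P i -> 0 <= F i) ->
  F j <= \big[Rplus/0]_(i | P i) F i.
Proof.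
move=> Pj F_ge0; rewrite (bigD1 j) //=.
suff : 0 <= \big[Rplus/0]_(i | P i && (i != j)) F i by lra.
by apply: sumR_ge0 => i /andP[/F_ge0].
Qed.

Lemma sumR_disjoint_le P P1 P2 F :
  (forall i, P1 i -> P i) -> (forall i, P2 i -> P i) -> (forall i, P1 i -> ~~ P2 i) ->
  (forall i, P i -> 0 <= F i) ->
  \big[Rplus/0]_(i | P1 i) F i + \big[Rplus/0]_(i | P2 i) F i
    <= \big[Rplus/0]_(i | P i) F i.
Proof.
move=> P1P P2P P1nP2 F_ge0; rewrite (bigID P1 P) /=.
rewrite [X in _ <= X + _](eq_bigl P1); last by move=> i; case: (boolP (P1 i)) => P1i;
  rewrite ?andbT ?andbF ?P1P.
rewrite [X in _ <= _ + X](bigID P2) /=.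
rewrite [X in _ <= _ + (X + _)](eq_bigl P2); last first.
  move=> i; case: (boolP (P2 i)) => P2i; rewrite ?andbT ?andbF ?P2P //=.
  by apply/negP => /P1nP2; rewrite P2i.
suff : 0 <= \big[Rplus/0]_(i | (P i && ~~ P1 i) && ~~ P2 i) F i by lra.
by apply: sumR_ge0 => i /andP[/andP[/F_ge0]].
Qed.

Lemma uniform_delta (S : {set I}) (Q : I -> R -> Prop) :
  (forall k, k \in S -> exists d, 0 < d /\ forall e, 0 < e <= d -> Q k e) ->
  exists d, 0 < d /\ forall k, k \in S -> Q k d.
Proof.
move=> HQ; have HQs : forall s : seq I, {subset s <= S} ->
    exists d, 0 < d /\ forall k, k \in s -> forall e, 0 < e <= d -> Q k e.
  elim=> [|k s IH] sS; first by exists 1; split; [lra |].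
  have [d1 [d1_gt0 H1]] := HQ k (sS k (mem_head _ _)).
  have [d2 [d2_gt0 H2]] := IH (fun i si => sS i (mem_behead (si : i \in behead (k :: s)))).
  exists (Rmin d1 d2); split; first exact: Rmin_glb_lt.
  move=> i; rewrite in_cons => /predU1P[-> | si] e He.
    by apply: H1; have := Rmin_l d1 d2; lra.
  by apply: H2 => //; have := Rmin_r d1 d2; lra.
have /(_ (enum S)) [|d [d_gt0 Hd]] := HQs; first by move=> i; rewrite mem_enum.
by exists d; split => // k kS; apply: Hd; [rewrite mem_enum | lra].
Qed.

End RealSums.

Lemma card_setD_lt (T : finType) (A B : {set T}) :
  A :&: B != set0 -> (#|A :\: B| < #|A|)%nat.
Proof.
move=> AB_neq0; rewrite cardsD ltn_subrL !card_gt0 AB_neq0.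
exact: subset_neq0 (subsetIl A B) AB_neq0.
Qed.

Lemma finite_choice {I : finType} (S : {set I}) (P : I -> R -> Prop) :
  (forall k, k \in S -> exists x, P k x) -> exists g, forall k, k \in S -> P k (g k).
Proof.
move=> HP; have HP' k : exists x, k \in S -> P k x.
  by case: (boolP (k \in S)) => [/HP[x Px] | _]; [exists x | exists 0].
exists (fun k => proj1_sig (constructive_indefinite_description _ (HP' k))).
by move=> k; apply: (proj2_sig (constructive_indefinite_description _ (HP' k))).
Qed.

Lemma lub_gt E u : is_lub E u -> forall eps, 0 < eps -> exists e, E e /\ u - eps < e.
Proof.
move=> [_ u_least] eps eps_gt0; apply: NNPP => noE.
suff : u <= u - eps by lra.
apply: u_least => x Ex; apply: Rnot_lt_le => ltx; apply: noE; by exists x.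
Qed.

Lemma exists_pos_mul_lt a N : 0 < a -> 0 <= N -> exists e, 0 < e /\ N * e < a.
Proof.
move=> a_gt0 N_ge0; have N1_gt0 : 0 < N + 1 by lra.
exists (a / (N + 1)); split; first exact: Rdiv_lt_0_compat.
have : N * (a / (N + 1)) = a - a / (N + 1) by field; lra.
have := Rdiv_lt_0_compat a (N + 1) a_gt0 N1_gt0; lra.
Qed.

Section MonotoneContinuous.
Variable g : R -> R.
Hypotheses (g_mono : nondecr_nonneg g) (g_cont : cont_nonneg g).

Lemma cont_nonneg_near x eps : 0 <= x -> 0 < eps ->
  exists d, 0 < d /\ forall y, 0 <= y -> x - d < y < x + d -> g x - eps < g y < g x + eps.
Proof.
move=> x_ge0 eps_gt0; have [d [d_gt0 Hd]] := g_cont x x_ge0 eps eps_gt0.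
exists d; split => // y y_ge0 Hy.
by have /Rabs_def2 := Hd y y_ge0 (Rabs_def1 (y - x) d ltac:(lra) ltac:(lra)); lra.
Qed.

Lemma first_hit a b t : 0 <= a -> a <= b -> g a <= t -> t <= g b ->
  exists l, a <= l <= b /\ g l = t /\ forall x, a <= x < l -> g x < t.
Proof.
move=> a_ge0 ab gat tgb.
pose E x := x = a \/ (a <= x /\ g x < t).
have E_le x y : E x -> a <= y -> t <= g y -> x <= y.
  move=> [-> | [ax gxt]] ay tgy //; apply: Rnot_lt_le => yx.
  by have := g_mono y x (Rle_trans _ _ _ a_ge0 ay) (Rlt_le _ _ yx); lra.
have [l [l_ub l_least]] := completeness E (ex_intro _ b (fun x Ex => E_le x b Ex ab tgb))
  (ex_intro _ a (or_introl erefl)).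
have al : a <= l by apply: l_ub; left.
have below x : a <= x < l -> g x < t.
  move=> [ax xl]; apply: Rnot_le_lt => tgx.
  by have := l_least x (fun e Ee => E_le e x Ee ax tgx); lra.
exists l; split; first by split => //; apply: l_least => x Ex; exact: E_le Ex ab tgb.
split => //; case: (Rtotal_order (g l) t) => [glt | [// | tgl]].
- have [d [d_gt0 Hd]] := cont_nonneg_near l (t - g l) ltac:(lra) ltac:(lra).
  have El : E (l + d / 2) by right; have := Hd (l + d / 2); lra.
  by have := l_ub _ El; lra.
- have [d [d_gt0 Hd]] := cont_nonneg_near l (g l - t) ltac:(lra) ltac:(lra).
  case: (Req_dec l a) => [la | nla]; first by move: tgl; rewrite la; lra.
  pose y := Rmax a (l - d / 2).
  have [ay ly] : a <= y /\ l - d / 2 <= y by split; [apply: Rmax_l | apply: Rmax_r].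
  have yl : y < l by apply: Rmax_lub_lt; lra.
  by have := below y (conj ay yl); have := Hd y; lra.
Qed.

Lemma last_hit l t : 0 <= l -> g l = t ->
  (forall x, l <= x -> g x = t) \/
  exists u, l <= u /\ g u = t /\ forall x, u < x -> t < g x.
Proof.
move=> l_ge0 glt; case: (classic (exists b, l <= b /\ t < g b)) => [[b [lb tgb]] | noB];
  last first.
  left => x lx; have := g_mono l x l_ge0 lx; case: (Rle_lt_dec (g x) t) => ? ?; first lra.
  by exfalso; apply: noB; exists x.
right; pose E x := l <= x /\ g x <= t.
have E_le x : E x -> x <= b.
  move=> [lx gxt]; apply: Rnot_lt_le => bx.
  by have := g_mono b x (Rle_trans _ _ _ l_ge0 lb) (Rlt_le _ _ bx); lra.
have [u u_lub] :=
  completeness E (ex_intro _ b E_le) (ex_intro _ l (conj (Rle_refl l) (Req_le _ _ glt))).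
have lu : l <= u by apply: (proj1 u_lub); split; lra.
have above x : u < x -> t < g x.
  move=> ux; apply: Rnot_le_lt => gxt.
  by have := proj1 u_lub x (conj (Rle_trans _ _ _ lu (Rlt_le _ _ ux)) gxt); lra.
exists u; split => //; split => //.
have tgu : t <= g u by rewrite -glt; apply: g_mono.
case: (Rle_lt_or_eq_dec _ _ tgu) => [tltgu | //].
have [d [d_gt0 Hd]] := cont_nonneg_near u (g u - t) ltac:(lra) ltac:(lra).
have [e [[le get] ude]] := lub_gt _ _ u_lub (d / 2) ltac:(lra).
have eu : e <= u by apply: (proj1 u_lub).
by have := Hd e; lra.
Qed.

End MonotoneContinuous.

Section Game.
Context {n : nat} {f : 'I_n -> R -> R} {mu : {set 'I_n} -> R}.
Hypotheses (f_mono : forall j, nondecr_nonneg (f j)) (f_cont : forall j, cont_nonneg (f j))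
  (mu_ge0 : forall T : {set 'I_n}, T != set0 -> 0 <= mu T).
Implicit Types (S P : {set 'I_n}) (y z l u : 'I_n -> R).

Definition at_level (S : {set 'I_n}) t (x : 'I_n -> R) :=
  forall k, k \in S -> 0 <= x k /\ f k (x k) = t.

Lemma EqValP S m t :
  EqVal f S m t <-> exists x, at_level S t x /\ \sumR_(k in S) x k = m.
Proof.
split=> [[x [x_ge0 [sum_x fx]]] | [x [x_at sum_x]]]; exists x.
  by split=> // k kS; split; [apply: x_ge0 | apply: fx].
by split; [|split] => // k /x_at[].
Qed.

Lemma at_level_sum_lt S c c' x y : S != set0 -> at_level S c x -> at_level S c' y ->
  c < c' -> \sumR_(k in S) x k < \sumR_(k in S) y k.
Proof.
move=> /set0Pn[j jS] x_at y_at cc'.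
have xy k : k \in S -> x k < y k.
  move=> kS; have [x_ge0 fx] := x_at k kS; have [y_ge0 fy] := y_at k kS.
  by apply: Rnot_le_lt => yx; have := f_mono k _ _ y_ge0 yx; lra.
by apply: (ltr_sumR (fun k => k \in S) x y j jS) => [k /xy /Rlt_le | ]; last exact: xy.
Qed.

Lemma EqVal_uniq S m c c' : S != set0 -> EqVal f S m c -> EqVal f S m c' -> c = c'.
Proof.
move=> S_neq0 /EqValP[x [x_at sum_x]] /EqValP[y [y_at sum_y]].
case: (Rtotal_order c c') => [cc' | [// | c'c]].
  by have := at_level_sum_lt S c c' x y S_neq0 x_at y_at cc'; lra.
by have := at_level_sum_lt S c' c y x S_neq0 y_at x_at c'c; lra.
Qed.

Lemma EqVal_between S t l z m : at_level S t l -> at_level S t z ->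
  (forall k, k \in S -> l k <= z k) ->
  \sumR_(k in S) l k <= m <= \sumR_(k in S) z k -> EqVal f S m t.
Proof.
move=> l_at z_at lz [lm mz]; apply/EqValP.
case: (Rle_lt_or_eq_dec _ _ (Rle_trans _ _ _ lm mz)) => [ltLZ | eqLZ];
  last by exists l; split => //; lra.
pose lam := (m - \sumR_(k in S) l k) / (\sumR_(k in S) z k - \sumR_(k in S) l k).
have [lam_ge0 lam_le1] : 0 <= lam <= 1.
  rewrite /lam; split; first by apply: Rle_mult_inv_pos; lra.
  by apply: (Rmult_le_reg_r (\sumR_(k in S) z k - \sumR_(k in S) l k)); [|field_simplify]; lra.
exists (fun k => l k + lam * (z k - l k)); split.
  move=> k kS; have [l_ge0 fl] := l_at k kS; have [z_ge0 fz] := z_at k kS.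
  have := lz k kS; set x := l k + _ => lzk.
  have [lx xz] : l k <= x <= z k by rewrite /x; split; nra.
  split; first lra.
  by have := f_mono k _ _ l_ge0 lx; have := f_mono k _ _ (Rle_trans _ _ _ l_ge0 lx) xz; lra.
by rewrite big_split sumR_mull sumR_sub /lam /=; field; apply/Rgt_not_eq/Rlt_0_minus.
Qed.

Section Reach.
Context {S : {set 'I_n}} {c m : R} {y : 'I_n -> R}.
Hypotheses (S_neq0 : S != set0) (y_at : at_level S c y) (sum_y_le : \sumR_(k in S) y k <= m).

Definition reachable t := c <= t /\ exists x, at_level S t x /\ \sumR_(k in S) x k <= m.

Lemma reachable_c : reachable c.
Proof. by split; [lra | exists y]. Qed.

Lemma m_ge0 : 0 <= m.
Proof. by have := sumR_ge0 (fun k => k \in S) y (fun k kS => proj1 (y_at k kS)); lra. Qed.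

Lemma reachable_le t k : reachable t -> k \in S -> t <= f k m.
Proof.
move=> [_ [x [x_at sum_x]]] kS; have [x_ge0 <-] := x_at k kS; apply: f_mono => //.
by have := sumR_ge_term (fun k => k \in S) x k kS (fun i iS => proj1 (x_at i iS)); lra.
Qed.

Lemma reachable_bounded : bound reachable.
Proof. by have /set0Pn[k kS] := S_neq0; exists (f k m) => t /reachable_le; apply. Qed.

Definition top_level : R :=
  proj1_sig (completeness reachable reachable_bounded (ex_intro _ c reachable_c)).

Lemma top_level_lub : is_lub reachable top_level.
Proof. exact: proj2_sig. Qed.

Lemma c_le_top_level : c <= top_level.
Proof. exact: (proj1 top_level_lub) reachable_c. Qed.

Lemma top_level_le k : k \in S -> top_level <= f k m.
Proof. by move=> kS; apply: (proj2 top_level_lub) => t /reachable_le; apply. Qed.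

Definition first_at_top k x :=
  0 <= x /\ f k x = top_level /\ forall w, 0 <= w < x -> f k w < top_level.

Lemma exists_first_at_top : exists l, forall k, k \in S -> first_at_top k (l k).
Proof.
apply: (finite_choice S first_at_top) => k kS; have [y_ge0 fy] := y_at k kS.
have f0_le : f k 0 <= top_level.
  by have := f_mono k _ _ (Rle_refl 0) y_ge0; have := c_le_top_level; lra.
have [l [[l_ge0 _] l_first]] :=
  first_hit (f k) (f_mono k) (f_cont k) 0 m top_level (Rle_refl 0) m_ge0 f0_le
    (top_level_le k kS).
by exists l.
Qed.

Lemma first_at_top_at_level l : (forall k, k \in S -> first_at_top k (l k)) ->
  at_level S top_level l.
Proof. by move=> l_first k /l_first[l_ge0 [fl _]]. Qed.

Lemma first_at_top_sum_le l : (forall k, k \in S -> first_at_top k (l k)) ->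
  \sumR_(k in S) l k <= m.
Proof.
move=> l_first; apply: Rnot_lt_le => lt_m.
have [eps [eps_gt0 eps_small]] :=
  exists_pos_mul_lt (\sumR_(k in S) l k - m) (INR #|S|) ltac:(lra) (pos_INR _).
have [d [d_gt0 Hd]] : exists d, 0 < d /\ forall k, k \in S ->
    forall t x, top_level - d < t -> 0 <= x -> f k x = t -> l k - eps <= x.
  apply: (uniform_delta S (fun k d => forall t x,
    top_level - d < t -> 0 <= x -> f k x = t -> l k - eps <= x)) => k kS.
  have [l_ge0 [fl below]] := l_first k kS.
  case: (Rlt_le_dec (l k - eps) 0) => [l_eps_lt0 | l_eps_ge0].
    by exists 1; split => [|_ _ t x _ x_ge0 _]; lra.
  have f_below := below (l k - eps) ltac:(lra).
  exists (top_level - f k (l k - eps)); split => [|e e_le t x te x_ge0 fx]; first lra.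
  by apply: Rnot_lt_le => x_lt; have := f_mono k _ _ x_ge0 (Rlt_le _ _ x_lt); lra.
have [t [[_ [x [x_at sum_x]]] td]] := lub_gt _ _ top_level_lub d d_gt0.
suff : \sumR_(k in S) l k <= \sumR_(k in S) x k + INR #|S| * eps by lra.
rewrite -sumR_const -big_split; apply: ler_sumR => k kS /=.
have [x_ge0 fx] := x_at k kS.
by have := Hd k kS t (x k) td x_ge0 fx; lra.
Qed.

Lemma last_at_top_sum_ge u : at_level S top_level u ->
  (forall k, k \in S -> forall x, u k < x -> top_level < f k x) -> m <= \sumR_(k in S) u k.
Proof.
move=> u_at u_last; apply: Rnot_lt_le => lt_m.
have [eps [eps_gt0 eps_small]] :=
  exists_pos_mul_lt (m - \sumR_(k in S) u k) (INR #|S|) ltac:(lra) (pos_INR _).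
have [d [d_gt0 Hd]] : exists d, 0 < d /\
    forall k, k \in S -> top_level + d <= f k (u k + eps).
  apply: (uniform_delta S (fun k d => top_level + d <= f k (u k + eps))) => k kS.
  have := u_last k kS (u k + eps) ltac:(lra).
  by exists (f k (u k + eps) - top_level); split => [|e]; lra.
(* the level [top_level + d] is then reached with total below [m] *)
have [x Hx] : exists x, forall k, k \in S ->
    u k <= x k <= u k + eps /\ f k (x k) = top_level + d.
  apply: (finite_choice S (fun k xk => u k <= xk <= u k + eps /\ f k xk = top_level + d)).
  move=> k kS; have [u_ge0 fu] := u_at k kS.
  have [xk [xk_in [fxk _]]] := first_hit (f k) (f_mono k) (f_cont k) (u k) (u k + eps)
    (top_level + d) u_ge0 ltac:(lra) ltac:(lra) (Hd k kS).
  by exists xk.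
suff : reachable (top_level + d) by move/(proj1 top_level_lub); lra.
split; first by have := c_le_top_level; lra.
exists x; split => [k kS | ].
  by have [[ux _] fx] := Hx k kS; have [u_ge0 _] := u_at k kS; split => //; lra.
suff : \sumR_(k in S) x k <= \sumR_(k in S) u k + INR #|S| * eps by lra.
rewrite -sumR_const -big_split; apply: ler_sumR => k kS /=.
by have [[_ xu] _] := Hx k kS.
Qed.

Lemma exists_at_top_sum_ge : exists z, at_level S top_level z /\ m <= \sumR_(k in S) z k.
Proof.
have [l l_first] := exists_first_at_top.
have l_at := first_at_top_at_level l l_first.
case: (classic (exists k, k \in S /\ forall x, l k <= x -> f k x = top_level)).
  move=> [k1 [k1S flat]]; pose z k := if k == k1 then l k + m else l k.
  have z_at : at_level S top_level z.
    move=> k kS; rewrite /z; case: eqP => [-> | _]; last exact: l_at.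
    by have [l_ge0 _] := l_at k1 k1S; have := m_ge0; split; [lra | apply: flat; lra].
  exists z; split => //; have := sumR_ge_term (fun k => k \in S) z k1 k1S
    (fun k kS => proj1 (z_at k kS)).
  by rewrite /z eqxx; have [l_ge0 _] := l_at k1 k1S; lra.
move=> not_flat.
have [u Hu] : exists u, forall k, k \in S ->
    l k <= u k /\ f k (u k) = top_level /\ forall x, u k < x -> top_level < f k x.
  apply: (finite_choice S (fun k uk => l k <= uk /\ f k uk = top_level /\
    forall x, uk < x -> top_level < f k x)) => k kS.
  have [l_ge0 fl] := l_at k kS.
  case: (last_hit (f k) (f_mono k) (f_cont k) (l k) top_level l_ge0 fl) => [flat | //].
  by case: not_flat; exists k.
have u_at : at_level S top_level u.
  by move=> k kS; have [lu [fu _]] := Hu k kS; have [l_ge0 _] := l_at k kS; split => //; lra.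
by exists u; split; last by apply: last_at_top_sum_ge => // k /Hu[_ []].
Qed.

Lemma EqVal_reach : exists c', c <= c' /\ EqVal f S m c'.
Proof.
exists top_level; split; first exact: c_le_top_level.
have [l l_first] := exists_first_at_top.
have [z [z_at m_le]] := exists_at_top_sum_ge.
have lz k : k \in S -> l k <= z k.
  move=> kS; have [z_ge0 fz] := z_at k kS; have [_ [_ below]] := l_first k kS.
  by apply: Rnot_lt_le => zl; have := below (z k) (conj z_ge0 zl); lra.
apply: (EqVal_between S top_level l z m (first_at_top_at_level l l_first) z_at lz).
by split; [exact: first_at_top_sum_le | ].
Qed.

End Reach.

Lemma demand_meet_ge0 S S' : 0 <= demand_meet mu S S'.
Proof.
apply: sumR_ge0 => T /andP[_ TS'_neq0]; apply: mu_ge0.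
exact: subset_neq0 (subsetIl T S') TS'_neq0.
Qed.

Lemma demand_set0 : demand mu set0 = 0.
Proof. by apply: big_pred0 => T; rewrite subset0 andNb. Qed.

Lemma demand_split S S' : demand mu S = demand mu (S :\: S') + demand_meet mu S S'.
Proof.
rewrite /demand (bigID (fun T => T :&: S' != set0)) /= Rplus_comm; congr Rplus.
  by apply: eq_bigl => T; rewrite subsetD -setI_eq0 negbK andbA.
apply: eq_bigl => T; case: (boolP (T :&: S' != set0)) => TS'; rewrite ?andbT ?andbF //.
by rewrite (subset_neq0 (subsetIl T S') TS').
Qed.

Lemma demand_meet_id S : demand_meet mu S S = demand mu S.
Proof.
apply: eq_bigl => T; case: (boolP (T \subset S)) => TS; rewrite ?andbF //=.
by rewrite (setIidPl TS) andbT.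
Qed.

(* no demand inside [S1] meets [S' :\: S1], so the two sums on the left are over disjoint demands *)
Lemma demand_meet_split_le P (S1 S' : {set 'I_n}) : S1 \subset P ->
  demand_meet mu S1 (S' :&: S1) + demand_meet mu P (S' :\: S1) <= demand_meet mu P S'.
Proof.
move=> S1P; rewrite /demand_meet.
apply: (sumR_disjoint_le (fun T : {set 'I_n} => (T \subset P) && (T :&: S' != set0))
  (fun T : {set 'I_n} => (T \subset S1) && (T :&: (S' :&: S1) != set0))
  (fun T : {set 'I_n} => (T \subset P) && (T :&: (S' :\: S1) != set0))).
- move=> T /andP[TS1 TS'S1]; rewrite (subset_trans TS1 S1P).
  exact: subset_neq0 (setIS T (subsetIl S' S1)) TS'S1.
- move=> T /andP[-> TS'S1] /=; exact: subset_neq0 (setIS T (subsetDl S' S1)) TS'S1.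
- move=> T /andP[TS1 _]; suff -> : T :&: (S' :\: S1) = set0 by rewrite eqxx andbF.
  by apply/setP => i; rewrite !inE; case: (boolP (i \in T)) => // /(subsetP TS1) ->.
- move=> T /andP[_ TS'_neq0]; apply: mu_ge0.
  exact: subset_neq0 (subsetIl T S') TS'_neq0.
Qed.

Lemma inM_setD_EG_ge S c S' : inM f mu S c S' -> EG f mu S c ->
  S :\: S' != set0 /\ exists c', c <= c' /\ EG f mu (S :\: S') c'.
Proof.
move=> [S'_neq0 [S'S notEq]] /EqValP[x [x_at sum_x]].
have x_at' : at_level S' c x by move=> k /(subsetP S'S)/x_at.
have meet_lt : demand_meet mu S S' < \sumR_(k in S') x k.
  have Eq' : EqVal f S' (\sumR_(k in S') x k) c by apply/EqValP; exists x.
  apply: Rnot_le_lt => le_meet; apply: (notEq _ _ Eq').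
  by split => //; apply: sumR_ge0 => k /x_at'[].
have x_atD : at_level (S :\: S') c x by move=> k; rewrite inE => /andP[_ /x_at].
have sum_lt : \sumR_(k in S :\: S') x k < demand mu (S :\: S').
  apply: (Rplus_lt_reg_r (demand_meet mu S S')); rewrite -demand_split -sum_x.
  by rewrite [X in _ < X](big_setID S') (setIidPr S'S) Rplus_comm; apply: Rplus_lt_compat_r.
suff D_neq0 : S :\: S' != set0.
  by split => //; apply: EqVal_reach D_neq0 x_atD (Rlt_le _ _ sum_lt).
by apply/negP => /eqP D0; move: sum_lt; rewrite D0 big_set0 demand_set0; lra.
Qed.

Lemma inD_dominates_EG S c : S != set0 -> EG f mu S c ->
  exists S2 c2, inD f mu S2 /\ EG f mu S2 c2 /\ c <= c2.
Proof.
have [k le_S] := ubnP #|S|; elim: k S c le_S => // k IH S c le_S S_neq0 ES.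
case: (classic (exists S', inM f mu S c S')) => [[S' MS'] | noM]; last first.
  exists S, c; split; last by split; [| lra].
  by split => //; exists c; split => // S' MS'; exact: noM (ex_intro _ S' MS').
have [D_neq0 [c' [cc' ED]]] := inM_setD_EG_ge _ _ _ MS' ES.
have [_ [S'S _]] := MS'.
have le_D : (#|S :\: S'| < k)%nat.
  by rewrite -ltnS (leq_trans _ le_S) // ltnS card_setD_lt // (setIidPr S'S); case: MS'.
have [S2 [c2 [DS2 [ES2 c'c2]]]] := IH _ _ le_D D_neq0 ED.
by exists S2, c2; do !split => //; lra.
Qed.

Lemma inD_meet_EqVal S h S' : inD f mu S -> EG f mu S h -> S' != set0 -> S' \subset S ->
  exists m, 0 <= m <= demand_meet mu S S' /\ EqVal f S' m h.
Proof.
move=> [S_neq0 [c [ESc noM]]] ESh S'_neq0 S'S.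
have <- : c = h by apply: EqVal_uniq S_neq0 ESc ESh.
apply: NNPP => noEq; apply: (noM S'); split => //; split => // m m_in Eq.
by apply: noEq; exists m.
Qed.

Lemma PG_subset_at_level h P S' : is_PG f mu h P -> S' \subset P ->
  exists z, at_level S' h z /\ \sumR_(k in S') z k <= demand_meet mu P S'.
Proof.
move=> PG; have [k le_S'] := ubnP #|S'|; elim: k S' le_S' => // k IH S' le_S' S'P.
case: (eqVneq S' set0) => [-> | /set0Pn[j jS']].
  exists (fun=> 0); split => [i | ]; first by rewrite inE.
  by rewrite big_set0; apply: demand_meet_ge0.
have [S1 [DS1 [ES1 jS1]]] := (PG j).1 (subsetP S'P j jS').
have S1P : S1 \subset P by apply/subsetP => i iS1; apply/(PG i).2; exists S1.
have meet_neq0 : S' :&: S1 != set0 by apply/set0Pn; exists j; rewrite inE jS' jS1.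
have [m [[_ m_le] /EqValP[z1 [z1_at sum_z1]]]] :=
  inD_meet_EqVal _ _ _ DS1 ES1 meet_neq0 (subsetIr S' S1).
have le_D : (#|S' :\: S1| < k)%nat by rewrite -ltnS (leq_trans _ le_S') // ltnS card_setD_lt.
have [z2 [z2_at sum_z2]] := IH _ le_D (subset_trans (subsetDl S' S1) S'P).
exists (fun i => if i \in S1 then z1 i else z2 i); split.
  move=> i iS'; case: ifP => iS1; [apply: z1_at | apply: z2_at]; by rewrite inE iS' iS1.
rewrite (big_setID S1) /=.
rewrite (eq_bigr z1) => [|i]; last by rewrite inE => /andP[_ ->].
rewrite [X in _ + X](eq_bigr z2) => [|i]; last by rewrite inE => /andP[/negbTE ->].
apply: Rle_trans (demand_meet_split_le P S1 S' S1P).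
by apply: Rplus_le_compat sum_z2; rewrite sum_z1.
Qed.

Lemma PG_maximizes_EG h P : is_hG f mu h -> is_PG f mu h P -> inD f mu P /\ EG f mu P h.
Proof.
move=> [[S0 [DS0 ES0]] h_max] PG.
have P_neq0 : P != set0.
  have /set0Pn[j jS0] := DS0.1.
  by apply/set0Pn; exists j; apply/(PG j).2; exists S0.
have [zP [zP_at]] := PG_subset_at_level _ _ _ PG (subxx P).
rewrite demand_meet_id => zP_sum.
have [c [hc EPc]] := EqVal_reach P_neq0 zP_at zP_sum.
have [S2 [c2 [DS2 [ES2 cc2]]]] := inD_dominates_EG _ _ P_neq0 EPc.
have ch : c = h by have := h_max S2 c2 DS2 ES2; lra.
subst c.
split; last exact: EPc.
split; first exact: P_neq0.
exists h; split => [// | S' [S'_neq0 [S'P notEq]]].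
have [z [z_at z_sum]] := PG_subset_at_level _ _ _ PG S'P.
apply: (notEq (\sumR_(k in S') z k)); last by apply/EqValP; exists z.
by split => //; apply: sumR_ge0 => k /z_at[].
Qed.

End Game.

Local Close Scope R_scope.

Theorem mainTheorem18 (n : nat) (hn : (0 < n)%N)
  (f : 'I_n -> R -> R) (mu : {set 'I_n} -> R)
  (f_mono : forall j, nondecr_nonneg (f j))
  (f_cont : forall j, cont_nonneg (f j))
  (mu_nonneg : forall T : {set 'I_n}, T != set0 -> (0 <= mu T)%R)
  (h : R) (Hh : is_hG f mu h)
  (P : {set 'I_n}) (HP : is_PG f mu h P) :
  inD f mu P /\ EG f mu P h.
Proof. exact: PG_maximizes_EG f_mono f_cont mu_nonneg h P Hh HP. Qed.
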